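(* Let $X$ be a topological space, $\Delta$ a partition of $X$, $Y=X/\Delta$ with the quotient topology, and $p:X\to Y$ the quotient map. The following are equivalent: (1) $p$ is a locally trivial fibration; (2) the partition $\Delta$ is locally trivial and $p$ is an open map.
   Context: The partition $\Delta$ is locally trivial if for each $\omega\in\Delta$ there exist an open neighborhood $U$ of $\omega$, a topological space $J$, a point $t_0\in J$ and a homeomorphism $\phi:\omega\times J\to U$ such that $\phi(\omega\times\{t\})$ is an element of $\Delta$ for all $t\in J$ and $\phi(x,t_0)=x$ for all $x\in\omega$. The map $p$ is a locally trivial fibration if each $y\in Y$ has an open neighborhood $V$ and a homeomorphism $p^{-1}(V)\cong F\times V$ (for some space $F$) under which $p$ corresponds to the projection onto $V$. *)

From mathcomp Require Import all_boot all_order.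
From mathcomp Require Import all_classical topology.
Set Implicit Arguments. Unset Strict Implicit. Unset Printing Implicit Defensive.
Local Open Scope classical_set_scope.

Definition is_partition (X : Type) (D : set (set X)) : Prop :=
  (forall w, D w -> w !=set0) /\
  (forall x : X, exists2 w, D w & w x) /\
  (forall w1 w2, D w1 -> D w2 -> w1 `&` w2 !=set0 -> w1 = w2).

(* p : X -> Y is (up to homeomorphism, i.e. is) the quotient map X -> X/D:
   p is surjective, its fibres are exactly the blocks of D, and Y carries
   the quotient topology. *)
Definition is_quotient_map_of (X Y : topologicalType) (D : set (set X))
    (p : X -> Y) : Prop :=
  (forall y : Y, exists x, p x = y) /\
  (forall y : Y, D (p @^-1` [set y])) /\
  (forall w, D w -> exists y, w = p @^-1` [set y]) /\
  (forall V : set Y, open V <-> open (p @^-1` V)).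

Definition subspace_homeo (S T : topologicalType) (A : set S) (B : set T)
    (f : S -> T) (g : T -> S) : Prop :=
  (forall a, A a -> B (f a)) /\ (forall b, B b -> A (g b)) /\
  (forall a, A a -> g (f a) = a) /\ (forall b, B b -> f (g b) = b) /\
  {within A, continuous f} /\ {within B, continuous g}.

Definition locally_trivial_partition (X : topologicalType) (D : set (set X)) :
    Prop :=
  forall w, D w ->
  exists U : set X, open U /\ w `<=` U /\
  exists (J : topologicalType) (t0 : J) (phi : X * J -> X) (psi : X -> X * J),
    subspace_homeo (w `*` setT) U phi psi /\
    (forall t : J, D (phi @` (w `*` [set t]))) /\
    (forall x, w x -> phi (x, t0) = x).

Definition locally_trivial_fibration (X Y : topologicalType) (p : X -> Y) :
    Prop :=
  forall y : Y, exists V : set Y, open V /\ V y /\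
  exists (F : topologicalType) (h : X -> F * Y) (k : F * Y -> X),
    subspace_homeo (p @^-1` V) (setT `*` V) h k /\
    (forall x, (p @^-1` V) x -> (h x).2 = p x).

Definition open_map (X Y : topologicalType) (p : X -> Y) : Prop :=
  forall A : set X, open A -> open (p @` A).

From mathcomp Require Import all_boot all_order all_classical topology.
Set Implicit Arguments. Unset Strict Implicit. Unset Printing Implicit Defensive.
Local Open Scope classical_set_scope.

(* (1) => (2): a local trivialisation h : p^-1 V ~ F * V gives continuous
   local sections z |-> h^-1 (f, z) through every point of p^-1 V, so p is
   open; it also trivialises the partition around the fibre w over y in V,
   with J := V and w ~ F through f |-> h^-1 (f, y).
   (2) => (1): let phi : w * J ~ U trivialise the partition around the fibre
   w over y. A fibre meeting U meets a slice phi (w * {t}), and two blocks of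
   a partition that meet are equal; so U is saturated and the slice coordinate
   (phi^-1 u).2 factors as c (p u). As p is open, c is continuous on the open
   set V := p U, and x |-> ((phi^-1 x).1, p x) trivialises p over V, with
   inverse (f, z) |-> phi (f, c z). *)

Lemma id_continuous (T : topologicalType) : continuous (@id T).
Proof. by move=> x; exact: cvg_id. Qed.

Lemma fst_continuous (A B : topologicalType) : continuous (@fst A B).
Proof. by move=> [a b]; exact: cvg_fst. Qed.

Lemma snd_continuous (A B : topologicalType) : continuous (@snd A B).
Proof. by move=> [a b]; exact: cvg_snd. Qed.

Lemma continuous_withinP (S T : topologicalType) (A : set S) (f : S -> T) :
  {within A, continuous f} <->
  forall O, open O -> exists2 W, open W & W `&` A = f @^-1` O `&` A.
Proof.
rewrite continuousP; split => cf O oO; apply/open_subspaceP; exact: cf.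
Qed.

Lemma continuous_within_comp (R S T : topologicalType) (A : set R) (B : set S)
    (f : R -> S) (g : S -> T) :
  (forall a, A a -> B (f a)) ->
  {within A, continuous f} -> {within B, continuous g} ->
  {within A, continuous (g \o f)}.
Proof.
move=> AB /continuous_withinP cf /continuous_withinP cg.
apply/continuous_withinP => O oO.
have [W oW eW] := cg O oO; have [W' oW' eW'] := cf W oW.
exists W' => //; rewrite eW'; apply/seteqP; split => a [Ha Aa]; split => //.
- have : (W `&` B) (f a) by split => //; exact: AB.
  by rewrite eW => -[].
- have : (g @^-1` O `&` B) (f a) by split => //; exact: AB.
  by rewrite -eW => -[].
Qed.

Lemma continuous_within_pair (S T T' : topologicalType) (A : set S)
    (f : S -> T) (g : S -> T') :
  {within A, continuous f} -> {within A, continuous g} ->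
  {within A, continuous (fun x => (f x, g x))}.
Proof.
move=> /subspace_sigL_continuousP cf /subspace_sigL_continuousP cg.
apply/subspace_sigL_continuousP => x.
exact: (@cvg_pair _ _ _ _ _ _ _ _ _ _ _ (cf x) (cg x)).
Qed.

Lemma continuous_within_insubd (S T : topologicalType) (A : set S) (V : set T)
    (t0 : V) (g : S -> T) :
  (forall a, A a -> V (g a)) -> {within A, continuous g} ->
  {within A, continuous (fun a => insubd t0 (g a) : V)}.
Proof.
move=> AV cg; apply/subspace_sigL_continuousP.
apply: (@continuous_comp_initial _ _ _ val).
suff -> : val \o sigL A (fun a => insubd t0 (g a) : V) = sigL A g.
  exact/subspace_sigL_continuousP.
by apply/funext => a /=; rewrite val_insubd mem_set //; apply/AV/set_valP.
Qed.

Lemma open_map_factor_continuous (X Y Z : topologicalType) (p : X -> Y)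
    (U : set X) (g : X -> Z) (gbar : Y -> Z) :
  open_map p -> open U -> {within U, continuous g} ->
  (forall u, U u -> gbar (p u) = g u) -> {within p @` U, continuous gbar}.
Proof.
move=> om oU /continuous_withinP cg gbarE; apply/continuous_withinP => O oO.
have [W oW eW] := cg O oO.
exists (p @` (W `&` U)); first by apply: om; exact: openI.
apply/seteqP; split.
  move=> _ [[a [Wa Ua] <-] pUa]; split => //=; rewrite gbarE //.
  by have : (W `&` U) a by []; rewrite eW => -[].
move=> z [/= Og [u Uu puz]]; subst z; split; last by exists u.
exists u => //; have : (g @^-1` O `&` U) u by split => //=; rewrite -gbarE.
by rewrite -eW => -[].
Qed.

Lemma local_sections_open_map (X Y : topologicalType) (p : X -> Y) :
  (forall x, exists V (s : Y -> X), [/\ open V, V (p x), s (p x) = x,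
     forall z, V z -> p (s z) = z & {within V, continuous s}]) ->
  open_map p.
Proof.
move=> sections A oA; rewrite openE => _ [a Aa <-].
have [V [s [oV Vpa spa ps /continuous_withinP cs]]] := sections a.
have [W oW eW] := cs A oA.
rewrite /interior nbhsE; exists (W `&` V).
  split; [exact: openI|].
  by rewrite eW; split => //=; rewrite spa.
by move=> z; rewrite eW => -[Asz Vz]; exists (s z) => //; exact: ps.
Qed.

Lemma subspace_homeo_sym (S T : topologicalType) (A : set S) (B : set T)
    (f : S -> T) (g : T -> S) :
  subspace_homeo A B f g -> subspace_homeo B A g f.
Proof. by move=> [fAB [gBA [gf [fg [cf cg]]]]]. Qed.

Lemma subspace_homeo_comp (R S T : topologicalType) (A : set R) (B : set S)
    (C : set T) (f : R -> S) (g : S -> R) (f' : S -> T) (g' : T -> S) :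
  subspace_homeo A B f g -> subspace_homeo B C f' g' ->
  subspace_homeo A C (f' \o f) (g \o g').
Proof.
move=> [fAB [gBA [gf [fg [cf cg]]]]] [fBC [gCB [gf' [fg' [cf' cg']]]]].
split; first by move=> a Aa; exact/fBC/fAB.
split; first by move=> c Cc; exact/gBA/gCB.
split; first by move=> a Aa /=; rewrite gf' ?gf //; exact: fAB.
split; first by move=> c Cc /=; rewrite fg ?fg' //; exact: gCB.
split; first exact: continuous_within_comp fAB cf cf'.
exact: continuous_within_comp gCB cg' cg.
Qed.

Lemma continuous_within_fst (S T U : topologicalType) (A : set S) (B : set T)
    (f : S -> U) :
  {within A, continuous f} -> {within A `*` B, continuous (fun q => f q.1)}.
Proof.
move=> cf; apply: (continuous_within_comp (B := A) (f := fst)) => //.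
- by move=> q [].
- exact/continuous_subspaceT/fst_continuous.
Qed.

Lemma continuous_within_snd (S T U : topologicalType) (A : set S) (B : set T)
    (f : T -> U) :
  {within B, continuous f} -> {within A `*` B, continuous (fun q => f q.2)}.
Proof.
move=> cf; apply: (continuous_within_comp (B := B) (f := snd)) => //.
- by move=> q [].
- exact/continuous_subspaceT/snd_continuous.
Qed.

Lemma subspace_homeoX (S S' T T' : topologicalType) (A : set S) (A' : set S')
    (B : set T) (B' : set T') (f : S -> T) (g : T -> S) (f' : S' -> T')
    (g' : T' -> S') :
  subspace_homeo A B f g -> subspace_homeo A' B' f' g' ->
  subspace_homeo (A `*` A') (B `*` B') (fun q => (f q.1, f' q.2))
    (fun q => (g q.1, g' q.2)).
Proof.
move=> [fAB [gBA [gf [fg [cf cg]]]]] [fAB' [gBA' [gf' [fg' [cf' cg']]]]].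
split; first by move=> q [Aq A'q]; split; [exact: fAB|exact: fAB'].
split; first by move=> q [Bq B'q]; split; [exact: gBA|exact: gBA'].
split; first by move=> [a a'] [/= Aa A'a]; rewrite gf ?gf'.
split; first by move=> [b b'] [/= Bb B'b]; rewrite fg ?fg'.
split; apply: continuous_within_pair.
- exact: continuous_within_fst.
- exact: continuous_within_snd.
- exact: continuous_within_fst.
- exact: continuous_within_snd.
Qed.

Lemma subspace_homeo_val (T : topologicalType) (V : set T) (t0 : V) :
  subspace_homeo [set: V] V val (fun z => insubd t0 z : V).
Proof.
split; first by move=> t _; exact: set_valP.
split=> //; split; first by move=> t _; exact: valKd.
split; first by move=> z Vz; rewrite val_insubd mem_set.
split; first exact/continuous_subspaceT/initial_continuous.
apply: (continuous_within_insubd (g := id)) => //.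
exact/continuous_subspaceT/id_continuous.
Qed.

Lemma quotient_map_continuous (X Y : topologicalType) (D : set (set X))
    (p : X -> Y) :
  is_quotient_map_of D p -> continuous p.
Proof. by move=> [_ [_ [_ qtop]]]; apply/continuousP => O /qtop. Qed.

Section Trivialization.
Variables (X Y F : topologicalType) (p : X -> Y) (V : set Y).
Variables (h : X -> F * Y) (k : F * Y -> X).
Hypothesis hk_homeo : subspace_homeo (p @^-1` V) (setT `*` V) h k.
Hypothesis h_snd : forall x, V (p x) -> (h x).2 = p x.

Lemma trivialization_fibre (b : F * Y) : V b.2 -> p (k b) = b.2.
Proof.
have [_ [kBA [_ [hk _]]]] := hk_homeo.
by move=> Vb; rewrite -h_snd ?hk //; exact: kBA.
Qed.

Lemma trivializationK (u : X) : V (p u) -> k ((h u).1, p u) = u.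
Proof.
have [_ [_ [kh _]]] := hk_homeo.
by move=> Vu; rewrite -h_snd // -surjective_pairing kh.
Qed.

Lemma trivialization_section_continuous (f : F) :
  {within V, continuous (fun z => k (f, z))}.
Proof.
have [_ [_ [_ [_ [_ ck]]]]] := hk_homeo.
apply: (continuous_within_comp (B := setT `*` V) (f := fun z => (f, z))) => //.
apply: (continuous_within_pair (f := fun=> f) (g := id));
  apply: continuous_subspaceT; [exact: cst_continuous|exact: id_continuous].
Qed.

Lemma trivialization_fibre_homeo (y : Y) : V y ->
  subspace_homeo (p @^-1` [set y]) [set: F] (fun x => (h x).1)
    (fun f => k (f, y)).
Proof.
have [_ [_ [_ [hk [ch ck]]]]] := hk_homeo.
move=> Vy; split=> //.
split; first by move=> f _; exact: trivialization_fibre.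
split; first by move=> x px; rewrite -{1}px trivializationK // px.
split; first by move=> f _; rewrite hk.
split.
  apply: (continuous_within_comp (B := setT) (f := h)) => //.
    by apply: continuous_subspaceW ch => x px; rewrite /= px.
  exact/continuous_subspaceT/fst_continuous.
apply: (continuous_within_comp (B := setT `*` V) (f := fun f => (f, y))) => //.
apply: (continuous_within_pair (f := id) (g := fun=> y));
  apply: continuous_subspaceT; [exact: id_continuous|exact: cst_continuous].
Qed.

End Trivialization.

Lemma fibration_open_map (X Y : topologicalType) (p : X -> Y) :
  locally_trivial_fibration p -> open_map p.
Proof.
move=> fib; apply: local_sections_open_map => a.
have [V [oV [Vpa [F [h [k [hk_homeo h_snd]]]]]]] := fib (p a).
exists V, (fun z => k ((h a).1, z)); split => //.
- exact: (trivializationK hk_homeo h_snd).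
- by move=> z Vz; exact: (trivialization_fibre hk_homeo h_snd (b := (_, z))).
- exact: (trivialization_section_continuous hk_homeo).
Qed.

Lemma fibration_locally_trivial_partition (X Y : topologicalType)
    (D : set (set X)) (p : X -> Y) :
  is_quotient_map_of D p -> locally_trivial_fibration p ->
  locally_trivial_partition D.
Proof.
move=> [_ [fibreD [blockE qtop]]] fib _ /blockE [y ->].
have [V [oV [Vy [F [h [k [hk_homeo h_snd]]]]]]] := fib y.
have fibre_homeo := trivialization_fibre_homeo hk_homeo h_snd Vy.
have [_ [_ [fibreK [fibreKV _]]]] := fibre_homeo.
pose t0 : V := exist _ y (mem_set Vy).
exists (p @^-1` V); split; first exact/qtop.
split; first by move=> x /= ->.
exists V, t0, (k \o fun q => ((h q.1).1, val q.2)),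
  ((fun b => (k (b.1, y), insubd t0 b.2 : V)) \o h).
split; last split.
- apply: subspace_homeo_comp (subspace_homeo_sym hk_homeo).
  exact: subspace_homeoX fibre_homeo (subspace_homeo_val t0).
- move=> t; suff -> : (k \o fun q => ((h q.1).1, val q.2)) @`
      (p @^-1` [set y] `*` [set t]) = p @^-1` [set val t] by exact: fibreD.
  apply/seteqP; split.
    move=> _ [[x _] [/= _ ->] <-] /=.
    exact: (trivialization_fibre hk_homeo h_snd (b := (_, val t))) (set_valP t).
  move=> u put; have {}put : p u = val t := put; exists (k ((h u).1, y), t).
    by split => //=; exact: (trivialization_fibre hk_homeo h_snd (b := (_, y))).
  rewrite /= fibreKV // -put (trivializationK hk_homeo h_snd) // put.
  exact: set_valP.
- by move=> x wx; exact: fibreK.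
Qed.

Section TrivialNeighbourhood.
Variables (X Y J : topologicalType) (D : set (set X)) (p : X -> Y).
Hypothesis D_partition : is_partition D.
Hypothesis p_quotient : is_quotient_map_of D p.
Variables (x0 : X) (U : set X) (phi : X * J -> X) (psi : X -> X * J).
Local Notation w := (p @^-1` [set p x0]).
Hypothesis phi_homeo : subspace_homeo (w `*` setT) U phi psi.
Hypothesis phi_slice : forall t, D (phi @` (w `*` [set t])).

Lemma psi_fst_fibre (u : X) : U u -> w (psi u).1.
Proof. by have [_ [psiBA _]] := phi_homeo; move=> /psiBA []. Qed.

Lemma p_phi_slice (x x' : X) (t : J) : w x -> w x' ->
  p (phi (x, t)) = p (phi (x', t)).
Proof.
have [_ [_ [blockE _]]] := p_quotient.
move=> wx wx'; have [z E] := blockE _ (phi_slice t).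
have : (phi @` (w `*` [set t])) (phi (x, t)) by exists (x, t).
have : (phi @` (w `*` [set t])) (phi (x', t)) by exists (x', t).
by rewrite E /= => -> ->.
Qed.

Lemma fibre_slice (u : X) : U u ->
  p @^-1` [set p u] = phi @` (w `*` [set (psi u).2]).
Proof.
have [_ [_ disj]] := D_partition; have [_ [fibreD _]] := p_quotient.
have [_ [_ [_ [phipsi _]]]] := phi_homeo.
move=> Uu; apply: disj; [exact: fibreD|exact: phi_slice|].
exists u; split => //; exists (psi u); last exact: phipsi.
by split => //; exact: psi_fst_fibre.
Qed.

Lemma nbhd_saturated (u x : X) : U u -> p x = p u -> U x.
Proof.
have [phiAB _] := phi_homeo.
move=> Uu pxu; have : (p @^-1` [set p u]) x by [].
by rewrite fibre_slice // => -[q [wq _] <-]; apply: phiAB.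
Qed.

Lemma psi_snd_fibre (u u' : X) : U u -> p u' = p u -> (psi u').2 = (psi u).2.
Proof.
have [_ [_ [psiphi _]]] := phi_homeo.
move=> Uu pu; have : (p @^-1` [set p u]) u' by [].
by rewrite fibre_slice // => -[[x t] [/= wx ->] <-]; rewrite psiphi.
Qed.

Definition slice_coord (z : Y) : J :=
  (psi (xget x0 [set u | U u /\ p u = z])).2.

Lemma slice_coordE (u : X) : U u -> slice_coord (p u) = (psi u).2.
Proof.
move=> Uu; have [Us ps] : U (xget x0 [set v | U v /\ p v = p u]) /\
    p (xget x0 [set v | U v /\ p v = p u]) = p u.
  by apply: (@xgetPex _ x0 [set v | U v /\ p v = p u]); exists u.
by rewrite /slice_coord (psi_snd_fibre Uu ps).
Qed.

Hypothesis U_open : open U.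
Hypothesis p_open : open_map p.

Lemma slice_coord_continuous : {within p @` U, continuous slice_coord}.
Proof.
have [_ [_ [_ [_ [_ cpsi]]]]] := phi_homeo.
apply: open_map_factor_continuous p_open U_open _ slice_coordE.
apply: (continuous_within_comp (B := setT) (f := psi)) => //.
exact/continuous_subspaceT/snd_continuous.
Qed.

Lemma nbhd_preimage_image : p @^-1` (p @` U) = U.
Proof.
apply/seteqP; split; last by move=> u Uu; exists u.
by move=> x [u Uu pux]; exact: (nbhd_saturated Uu).
Qed.

Let w0 : w := exist _ x0 (mem_set erefl).

Definition fibre_coord (x : X) : w * Y := (insubd w0 (psi x).1, p x).

Definition fibre_chart (q : w * Y) : X := phi (val q.1, slice_coord q.2).

Lemma fibre_chartK (x : X) : U x -> fibre_chart (fibre_coord x) = x.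
Proof.
have [_ [_ [_ [phipsi _]]]] := phi_homeo.
move=> Ux; rewrite /fibre_chart /= val_insubd mem_set; last first.
  exact: psi_fst_fibre.
by rewrite slice_coordE // -surjective_pairing phipsi.
Qed.

Lemma fibre_coordK (q : w * Y) : (p @` U) q.2 ->
  fibre_coord (fibre_chart q) = q.
Proof.
have [_ [_ [psiphi [phipsi _]]]] := phi_homeo.
case: q => f z /= [u Uu <-].
rewrite /fibre_coord /fibre_chart /= slice_coordE //.
rewrite psiphi /=; last by split => //; exact: (set_valP f).
rewrite valKd (p_phi_slice _ (set_valP f) (psi_fst_fibre Uu)).
by rewrite -surjective_pairing phipsi.
Qed.

Lemma fibre_chart_homeo :
  subspace_homeo (p @^-1` (p @` U)) (setT `*` p @` U) fibre_coord fibre_chart.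
Proof.
have [phiAB [_ [_ [_ [cphi cpsi]]]]] := phi_homeo.
rewrite nbhd_preimage_image; split; first by move=> x Ux; split => //; exists x.
split; first by move=> [f z] _; apply: phiAB; split => //=; exact: (set_valP f).
split; first exact: fibre_chartK.
split; first by move=> q [_ pUq]; exact: fibre_coordK.
split.
  apply: continuous_within_pair.
    apply: continuous_within_insubd => [x|]; first exact: psi_fst_fibre.
    apply: (continuous_within_comp (B := setT) (f := psi)) => //.
    exact/continuous_subspaceT/fst_continuous.
  exact/continuous_subspaceT/(quotient_map_continuous p_quotient).
apply: (continuous_within_comp (B := w `*` setT)
  (f := fun q : w * Y => (val q.1, slice_coord q.2)) _ _ cphi).
  by move=> q _; split => //; exact: (set_valP q.1).
apply: continuous_within_pair; last first.
  exact: continuous_within_snd slice_coord_continuous.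
apply: continuous_subspaceT => q.
exact: continuous_comp (@fst_continuous _ _ q) (@initial_continuous _ _ val _).
Qed.

End TrivialNeighbourhood.

Lemma partition_fibration (X Y : topologicalType) (D : set (set X))
    (p : X -> Y) :
  is_partition D -> is_quotient_map_of D p ->
  locally_trivial_partition D -> open_map p -> locally_trivial_fibration p.
Proof.
move=> D_partition p_quotient trivialD p_open y.
have [p_surj [fibreD _]] := p_quotient; have [x0 <-] := p_surj y.
have [U [U_open [wU [J [_ [phi [psi [phi_homeo [phi_slice _]]]]]]]]] :=
  trivialD _ (fibreD (p x0)).
exists (p @` U); split; first exact: p_open.
split; first by exists x0 => //; exact: wU.
exists _, (fibre_coord p x0 psi),
  (@fibre_chart _ _ _ p x0 U phi psi); split => //.
exact (fibre_chart_homeo D_partition p_quotient phi_homeo phi_slice U_open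
  p_open).
Qed.

Theorem lemma3p3 (X Y : topologicalType) (D : set (set X)) (p : X -> Y) :
  is_partition D -> is_quotient_map_of D p ->
  (locally_trivial_fibration p <->
   (locally_trivial_partition D /\ open_map p)).
Proof.
move=> D_partition p_quotient; split.
  move=> fib; split; last exact: fibration_open_map.
  exact: fibration_locally_trivial_partition p_quotient fib.
move=> [trivialD p_open].
exact: partition_fibration D_partition p_quotient trivialD p_open.
Qed.
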